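(* Let $K:X\times X\to\mathbb{C}$ be positive definite and assume $\delta_x\in\mathscr{H}(K)$ for all $x\in X$. Then a function $h$ on $X$ belongs to $\mathscr{H}(K)$ if and only if $\sup_F\|K_F^{-1/2}h_F\|_{\ell^2(F)}<\infty$, the supremum over all finite subsets $F\subset X$, where $h_F=h|_F$ and $K_F=(K(x,y))_{x,y\in F}$. If $h\in\mathscr{H}(K)$, then $\|h\|^2_{\mathscr{H}(K)}=\sup_F\|K_F^{-1/2}h_F\|^2_{\ell^2(F)}$.
   Context: $\delta_x$ is the function on $X$ equal to $1$ at $x$ and $0$ elsewhere; $\mathscr{H}(K)$ is the reproducing kernel Hilbert space of $K$ (completion of span of $K(\cdot,x)$, $\langle K(\cdot,x),K(\cdot,y)\rangle=K(x,y)$, $\langle K(\cdot,x),h\rangle=h(x)$). Under the assumption, each $K_F$ is a positive invertible matrix and $K_F^{-1/2}$ is defined by the spectral theorem. *)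

From mathcomp Require Import all_boot all_algebra.
From mathcomp Require Import all_classical all_reals.
From mathcomp Require Export complex.
From Stdlib Require List.
Set Implicit Arguments. Unset Strict Implicit. Unset Printing Implicit Defensive.
Import GRing.Theory Num.Theory.
Local Open Scope ring_scope.

Section RKHS.
Variables (R : realType) (X : Type).

(* An element of the pre-Hilbert space H_0 = span{K(.,x)} is represented by a
   finite list of pairs (x_i, c_i), standing for sum_i c_i K(., x_i). *)
Definition kfun (K : X -> X -> R[i]) (p : seq (X * R[i])%type) : X -> R[i] :=
  fun y => \sum_(q <- p) q.2 * K y q.1.

(* ||sum_i c_i K(.,x_i)||^2 = sum_{i,j} conj(c_i) c_j K(x_i,x_j) *)
Definition kform (K : X -> X -> R[i]) (p : seq (X * R[i])%type) : R[i] :=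
  \sum_(a <- p) \sum_(b <- p) Num.conj a.2 * b.2 * K a.1 b.1.

Definition knorm2 (K : X -> X -> R[i]) (p : seq (X * R[i])%type) : R :=
  complex.Re (kform K p).

Definition kdiff (p q : seq (X * R[i])%type) : seq (X * R[i])%type :=
  p ++ [seq (a.1, - a.2) | a <- q].

(* K positive definite: sum_{i,j} conj(c_i) c_j K(x_i,x_j) >= 0 for all finite
   families (in R[i], 0 <= z means z is real and nonnegative). *)
Definition pos_def (K : X -> X -> R[i]) : Prop :=
  forall p : seq (X * R[i])%type, 0 <= kform K p.

(* u is a Cauchy sequence in H_0 (for the norm of H_0) converging pointwise to h:
   this realizes the completion of H_0 as a space of functions on X. *)
Definition approximates (K : X -> X -> R[i]) (h : X -> R[i])
    (u : nat -> seq (X * R[i])%type) : Prop :=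
  (forall e : R, 0 < e -> exists N : nat, forall m n : nat,
      (N <= m)%N -> (N <= n)%N -> knorm2 K (kdiff (u m) (u n)) < e) /\
  (forall (x : X) (e : R), 0 < e -> exists N : nat, forall n : nat,
      (N <= n)%N -> `|kfun K (u n) x - h x| < e%:C%C).

Definition inH (K : X -> X -> R[i]) (h : X -> R[i]) : Prop :=
  exists u, approximates K h u.

Definition rkhs_norm2 (K : X -> X -> R[i]) (h : X -> R[i]) (v : R) : Prop :=
  forall u, approximates K h u ->
  forall e : R, 0 < e -> exists N : nat, forall n : nat,
      (N <= n)%N -> `|knorm2 K (u n) - v| < e.

Definition delta (x : X) : X -> R[i] :=
  fun y => if pselect (y = x) then 1 else 0.

(* For a finite subset F given by a duplicate-free list xs: K_F and h_F *)
Definition Kmx (K : X -> X -> R[i]) (xs : seq X) : 'M[R[i]]_(size xs) :=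
  \matrix_(i, j) K (tnth (in_tuple xs) i) (tnth (in_tuple xs) j).

Definition hcol (h : X -> R[i]) (xs : seq X) : 'cV[R[i]]_(size xs) :=
  \col_i h (tnth (in_tuple xs) i).

End RKHS.

Definition adjmx (R : realType) m n (M : 'M[R[i]]_(m, n)) : 'M[R[i]]_(n, m) :=
  map_mx Num.conj M^T.

Definition psd_mx (R : realType) n (S : 'M[R[i]]_n) : Prop :=
  S = adjmx S /\ forall v : 'cV[R[i]]_n, 0 <= (adjmx v *m S *m v) 0 0.

Definition inv_sqrt_mx (R : realType) n (M : 'M[R[i]]_n) : 'M[R[i]]_n :=
  xget 0 [set S | psd_mx S /\ S *m S = invmx M].

Definition l2norm2 (R : realType) n (v : 'cV[R[i]]_n) : R :=
  \sum_i complex.Re (Num.conj (v i 0) * v i 0).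

Definition Qform (R : realType) (X : Type) (K : X -> X -> R[i]) (h : X -> R[i])
    (xs : seq X) : R :=
  l2norm2 (inv_sqrt_mx (Kmx K xs) *m hcol h xs).

Arguments delta {R X} x _.

From mathcomp Require Import all_boot all_algebra all_classical all_reals complex.
From mathcomp Require Import order spectral ring lra.
From Stdlib Require List.
Set Implicit Arguments. Unset Strict Implicit. Unset Printing Implicit Defensive.
Import Order.TTheory GRing.Theory Num.Theory.
Local Open Scope classical_set_scope.
Local Open Scope complex_scope.
Local Open Scope ring_scope.

(* For a finite set F of points, the Gram matrix K_F is invertible because the delta_x
   lie in H(K).  Hence P_F h := sum_(x in F) (K_F^-1 h_F)_x K(., x) is the element of
   H_0 = span {K(., x)} that agrees with h on F and is orthogonal to every element of H_0
   vanishing on F; in particular it has the least norm among such interpolants, and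
   ||P_F h||^2 = h_F^* K_F^-1 h_F = ||K_F^-1/2 h_F||^2.
   If u_n in H_0 approximates h, pairing u_n with P_F h gives ||P_F h|| <= lim ||u_n||,
   while interpolating h on the support of u_m gives ||u_m|| <= sup_F ||P_F h|| + o(1);
   so ||u_n||^2 tends to the supremum.  Conversely, if the supremum S is finite, choose an
   increasing chain F_k with ||P_(F_k) h||^2 -> S: by Pythagoras the P_(F_k) h form a
   Cauchy sequence, and the reproducing inequality |f(x)|^2 <= K(x, x) ||f||^2 makes them
   converge pointwise to h. *)

Section ComplexModulus.
Variable R : realType.
Local Notation C := R[i].
Implicit Types z w : C.

Definition cmod z : R := complex.Re `|z|.

Lemma cmodE z : `|z| = (cmod z)%:C.
Proof. by rewrite RRe_real // normr_real. Qed.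

Lemma cmod_ge0 z : 0 <= cmod z.
Proof. by rewrite -(lecR 0) -cmodE normr_ge0. Qed.

Lemma ltc_cmod z e : (`|z| < e%:C) = (cmod z < e).
Proof. by rewrite cmodE ltcR. Qed.

Lemma cmodM z w : cmod (z * w) = cmod z * cmod w.
Proof. by apply: complexI; rewrite rmorphM /= -!cmodE normrM. Qed.

Lemma cmodJ z : cmod z^* = cmod z.
Proof. by apply: complexI; rewrite -!cmodE norm_conjC. Qed.

Lemma cmodN z : cmod (- z) = cmod z.
Proof. by apply: complexI; rewrite -!cmodE normrN. Qed.

Lemma cmod_eq0 z : cmod z = 0 -> z = 0.
Proof. by move=> z0; apply/eqP; rewrite -normr_eq0 cmodE z0. Qed.

Lemma sqr_cmod z : z^* * z = (cmod z ^+ 2)%:C.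
Proof. by rewrite rmorphXn /= -cmodE normCKC. Qed.

Lemma cmod_sum (I : Type) (s : seq I) (F : I -> C) :
  cmod (\sum_(i <- s) F i) <= \sum_(i <- s) cmod (F i).
Proof.
rewrite -lecR rmorph_sum /= -cmodE.
apply: le_trans (ler_norm_sum _ _ _) (ler_sum _ _) => i _.
by rewrite cmodE.
Qed.

Lemma ReJ z : complex.Re z^* = complex.Re z.
Proof. by case: z. Qed.

Lemma Re_realM (t : R) z : complex.Re (t%:C * z) = t * complex.Re z.
Proof. by case: z => a b /=; rewrite mul0r subr0. Qed.

Lemma ReB_le_cmod z w : complex.Re z - complex.Re w <= cmod (z - w).
Proof.
rewrite -raddfB /=; apply: le_trans (ler_norm _) _.
by rewrite -lecR -cmodE normc_ge_Re.
Qed.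

Lemma conj_eq_of_real_sum_diff (u v : C) :
  (u + v)^* = u + v -> ('i * (u - v))^* = 'i * (u - v) -> v = u^*.
Proof.
rewrite rmorphD rmorphM rmorphB /= conjCi => sum_real diff_real.
have : 'i * (v^* - u^*) = 'i * (u - v) by rewrite -diff_real; ring.
move/(mulfI (neq0Ci C)) => diff_eq.
have : 2 * v^* = 2 * u.
  have -> : 2 * v^* = (u^* + v^*) + (v^* - u^*) by ring.
  by rewrite sum_real diff_eq; ring.
have two_neq0 : (2 : C) != 0 by rewrite pnatr_eq0.
by move/(mulfI two_neq0) => <-; rewrite conjCK.
Qed.

End ComplexModulus.

Lemma le_sqrtM_of_quadratic_ge0 (R : rcfType) (A B c : R) : 0 <= A -> 0 <= B ->
  (forall t, 0 <= A - 2 * t * c + t ^+ 2 * B) -> c <= Num.sqrt A * Num.sqrt B.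
Proof.
move=> A_ge0 B_ge0 quad_ge0.
have [c_le0|c_gt0] := lerP c 0.
  by apply: le_trans c_le0 _; rewrite mulr_ge0 ?sqrtr_ge0.
rewrite -sqrtrM // -(ger0_norm (ltW c_gt0)) -sqrtr_sqr ler_sqrt ?mulr_ge0 //.
have [B0|B_neq0] := eqVneq B 0.
  have := quad_ge0 ((A + 1) / (2 * c)); rewrite B0 !mulr0 addr0.
  have -> : 2 * ((A + 1) / (2 * c)) * c = A + 1 by field; rewrite gt_eqF.
  lra.
have B_gt0 : 0 < B by rewrite lt_def B_neq0.
have := quad_ge0 (c / B).
have -> : A - 2 * (c / B) * c + (c / B) ^+ 2 * B = (A * B - c ^+ 2) / B by field.
by rewrite pmulr_lge0 ?invr_gt0 // subr_ge0.
Qed.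

Section MatrixSquareRoot.
Variable R : realType.
Local Notation C := R[i].

Lemma adjmxM m n p (M : 'M[C]_(m, n)) (N : 'M[C]_(n, p)) :
  adjmx (M *m N) = adjmx N *m adjmx M.
Proof. by rewrite /adjmx trmx_mul map_mxM. Qed.

Lemma adjmxK m n (M : 'M[C]_(m, n)) : adjmx (adjmx M) = M.
Proof. exact: trmxCK. Qed.

Lemma adjmx_inv n (M : 'M[C]_n) : adjmx (invmx M) = invmx (adjmx M).
Proof. by rewrite /adjmx trmx_inv map_invmx. Qed.

Lemma psd_mx_conj m n (P : 'M[C]_(m, n)) (D : 'M[C]_m) :
  psd_mx D -> psd_mx (adjmx P *m D *m P).
Proof.
case=> D_herm D_ge0; split; first by rewrite !adjmxM adjmxK -D_herm mulmxA.
move=> v; have -> : adjmx v *m (adjmx P *m D *m P) *m v =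
                    adjmx (P *m v) *m D *m (P *m v) by rewrite adjmxM !mulmxA.
exact: D_ge0.
Qed.

Lemma psd_mx_diag n (d : 'rV[C]_n) : (forall i, 0 <= d 0 i) -> psd_mx (diag_mx d).
Proof.
move=> d_ge0; split.
  rewrite /adjmx tr_diag_mx map_diag_mx; congr diag_mx; apply/rowP => i.
  by rewrite !mxE /= conj_Creal // ger0_real.
move=> w; rewrite mul_mx_diag !mxE; apply: sumr_ge0 => j _; rewrite !mxE.
by rewrite mulrAC -normCKC mulr_ge0 // exprn_ge0.
Qed.

Lemma psd_mx_diag_ge0 n (A : 'M[C]_n) i : psd_mx A -> 0 <= A i i.
Proof.
case=> _ /(_ (delta_mx i 0)).
by rewrite /adjmx trmx_delta map_delta_mx -rowE -colE !mxE.
Qed.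

Lemma psd_mx_sqrt n (M : 'M[C]_n) : psd_mx M -> exists S, psd_mx S /\ S *m S = M.
Proof.
move=> M_psd; have [M_herm _] := M_psd.
have /orthomx_spectralP : M \is normalmx.
  by apply/normalmxP; change (M *m adjmx M = adjmx M *m M); rewrite -M_herm.
set P := spectralmx M; set d := spectral_diag M.
have P_unitary : P \is unitarymx := spectral_unitarymx M.
have PPadj : P *m adjmx P = 1%:M := unitarymxP P_unitary.
rewrite invmx_unitary // -/(adjmx P) => M_eq.
have d_ge0 i : 0 <= d 0 i.
  have : diag_mx d = adjmx (adjmx P) *m M *m adjmx P.
    by rewrite adjmxK M_eq !mulmxA PPadj mul1mx -mulmxA PPadj mulmx1.
  move/(congr1 (fun A : 'M[C]_n => A i i)); rewrite mxE eqxx mulr1n => ->.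
  exact/psd_mx_diag_ge0/psd_mx_conj.
pose s := \row_i sqrtC (d 0 i).
exists (adjmx P *m diag_mx s *m P); split.
  by apply/psd_mx_conj/psd_mx_diag => i; rewrite mxE sqrtC_ge0.
have ss : diag_mx s *m diag_mx s = diag_mx d.
  by rewrite mulmx_diag; congr diag_mx; apply/rowP => i; rewrite !mxE -expr2 sqrtCK.
by rewrite M_eq -ss !mulmxA -(mulmxA _ P) PPadj mulmx1.
Qed.

Lemma l2norm2E n (v : 'cV[C]_n) : l2norm2 v = complex.Re ((adjmx v *m v) 0 0).
Proof. by rewrite /l2norm2 mxE raddf_sum; apply: eq_bigr => i _; rewrite !mxE. Qed.

Lemma l2norm2_inv_sqrt_mx n (M : 'M[C]_n) (v : 'cV[C]_n) : psd_mx (invmx M) ->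
  l2norm2 (inv_sqrt_mx M *m v) = complex.Re ((adjmx v *m invmx M *m v) 0 0).
Proof.
move=> /psd_mx_sqrt/(xgetPex 0); rewrite -/(inv_sqrt_mx M).
case; case=> S_herm _ SS; rewrite l2norm2E adjmxM -S_herm.
by rewrite !mulmxA -(mulmxA _ (inv_sqrt_mx M) (inv_sqrt_mx M)) SS.
Qed.

End MatrixSquareRoot.

Fixpoint cumul (T : Type) (f : nat -> seq T) (k : nat) : seq T :=
  if k is k'.+1 then f k ++ cumul f k' else f 0.

Lemma mem_cumul (T : eqType) (f : nat -> seq T) k : {subset f k <= cumul f k}.
Proof. by case: k => [|k] x //= xf; rewrite mem_cat xf. Qed.

Lemma cumul_subset (T : eqType) (f : nat -> seq T) k l :
  (k <= l)%N -> {subset cumul f k <= cumul f l}.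
Proof.
move=> kl x; elim: l kl => [|l IH]; first by rewrite leqn0 => /eqP ->.
rewrite leq_eqVlt ltnS => /predU1P [-> //|kl] x_k /=.
by rewrite mem_cat IH ?orbT.
Qed.

Lemma eventuallyP (P : nat -> Prop) :
  (\forall n \near \oo, P n) <-> exists N, forall n, (N <= n)%N -> P n.
Proof. by split=> [[N _ NP]|[N NP]]; exists N => // n /NP. Qed.

Section RKHS.
Variables (R : realType) (X : eqType) (K : X -> X -> R[i]).
Local Notation C := R[i].
Local Notation L := (seq (X * C)%type).
Implicit Types (p q r : L) (h : X -> C) (xs ys : seq X) (u : nat -> L).

Definition kip p q : C := \sum_(a <- p) \sum_(b <- q) a.2^* * b.2 * K a.1 b.1.
Definition kpair p h : C := \sum_(a <- p) a.2^* * h a.1.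
Definition kopp p : L := [seq (a.1, - a.2) | a <- p].
Definition kscale c p : L := [seq (a.1, c * a.2) | a <- p].

Lemma kformE p : kform K p = kip p p.
Proof. by []. Qed.

Lemma knorm2_kip p : knorm2 K p = complex.Re (kip p p).
Proof. by []. Qed.

Lemma kdiffE p q : kdiff p q = p ++ kopp q.
Proof. by []. Qed.

Lemma kipE p q : kip p q = kpair p (kfun K q).
Proof.
by apply: eq_bigr => a _; rewrite /kfun mulr_sumr; apply: eq_bigr => b _; rewrite mulrA.
Qed.

Lemma kip_catl p1 p2 q : kip (p1 ++ p2) q = kip p1 q + kip p2 q.
Proof. exact: big_cat. Qed.

Lemma kip_catr p q1 q2 : kip p (q1 ++ q2) = kip p q1 + kip p q2.
Proof. by rewrite /kip -big_split; apply: eq_bigr => a _; rewrite big_cat. Qed.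

Lemma kip_oppl p q : kip (kopp p) q = - kip p q.
Proof.
rewrite /kip big_map -sumrN; apply: eq_bigr => a _; rewrite -sumrN.
by apply: eq_bigr => b _; rewrite rmorphN /= !mulNr.
Qed.

Lemma kip_oppr p q : kip p (kopp q) = - kip p q.
Proof.
rewrite /kip -sumrN; apply: eq_bigr => a _; rewrite big_map -sumrN.
by apply: eq_bigr => b _ /=; rewrite mulrN mulNr.
Qed.

Lemma kip_scalel c p q : kip (kscale c p) q = c^* * kip p q.
Proof.
rewrite /kip big_map mulr_sumr; apply: eq_bigr => a _; rewrite mulr_sumr.
by apply: eq_bigr => b _ /=; rewrite rmorphM /= !mulrA.
Qed.

Lemma kip_scaler c p q : kip p (kscale c q) = c * kip p q.
Proof.
rewrite /kip mulr_sumr; apply: eq_bigr => a _; rewrite big_map mulr_sumr.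
by apply: eq_bigr => b _ /=; rewrite !mulrA [_ * c]mulrC.
Qed.

Lemma kfun_cat p q y : kfun K (p ++ q) y = kfun K p y + kfun K q y.
Proof. exact: big_cat. Qed.

Lemma kfun_kdiff p q y : kfun K (kdiff p q) y = kfun K p y - kfun K q y.
Proof.
rewrite kdiffE kfun_cat /kfun big_map -sumrN.
by congr (_ + _); apply: eq_bigr => a _; rewrite mulNr.
Qed.

Lemma eq_kipr r p q : kfun K p =1 kfun K q -> kip r p = kip r q.
Proof. by move=> pq; rewrite !kipE; apply: eq_bigr => a _; rewrite pq. Qed.

Hypothesis Kpos : pos_def K.

Lemma kform_real p : (kform K p)^* = kform K p.
Proof. exact/conj_Creal/ger0_real/Kpos. Qed.

Lemma kform_single x c : kform K [:: (x, c)] = c^* * c * K x x.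
Proof. by rewrite /kform !big_cons !big_nil /= !addr0. Qed.

Lemma K_diag_ge0 x : 0 <= K x x.
Proof. by have := Kpos [:: (x, 1)]; rewrite kform_single rmorph1 !mul1r. Qed.

Lemma K_herm x y : K y x = (K x y)^*.
Proof.
have kform2 a b : kform K [:: (x, a); (y, b)] =
    a^* * a * K x x + a^* * b * K x y + (b^* * a * K y x + b^* * b * K y y).
  by rewrite /kform !big_cons !big_nil /= !addr0.
have K_diag z : (K z z)^* = K z z by apply/conj_Creal/ger0_real/K_diag_ge0.
apply: conj_eq_of_real_sum_diff.
  have -> : K x y + K y x = kform K [:: (x, 1); (y, 1)] - K x x - K y y.
    by rewrite kform2 rmorph1 !mul1r; ring.
  by rewrite !rmorphB /= kform_real !K_diag.
have -> : 'i * (K x y - K y x) = kform K [:: (x, 1); (y, 'i)] - K x x - K y y.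
  have i_norm : - 'i * 'i = 1 :> C by rewrite mulNr -expr2 sqrCi opprK.
  by rewrite kform2 rmorph1 conjCi !mul1r mulr1 i_norm; ring.
by rewrite !rmorphB /= kform_real !K_diag.
Qed.

Lemma kip_conj p q : kip q p = (kip p q)^*.
Proof.
rewrite /kip exchange_big rmorph_sum; apply: eq_bigr => b _.
rewrite rmorph_sum; apply: eq_bigr => a _.
by rewrite !rmorphM /= conjCK (K_herm b.1 a.1) [b.2 * _]mulrC.
Qed.

Lemma knorm2E p : (knorm2 K p)%:C = kip p p.
Proof. exact/RRe_real/ger0_real/Kpos. Qed.

Lemma knorm2_ge0 p : 0 <= knorm2 K p.
Proof. by rewrite -(lecR 0) knorm2E; apply: Kpos. Qed.

Lemma eq_knorm2 p q : kfun K p =1 kfun K q -> knorm2 K p = knorm2 K q.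
Proof.
move=> pq; apply: complexI; rewrite !knorm2E (eq_kipr p pq).
by rewrite kip_conj (eq_kipr q pq) -kip_conj.
Qed.

Lemma knorm2_cat p q :
  knorm2 K (p ++ q) = knorm2 K p + knorm2 K q + 2 * complex.Re (kip p q).
Proof.
rewrite /knorm2 !kformE kip_catl !kip_catr (kip_conj p q) !raddfD /= ReJ; ring.
Qed.

Lemma knorm2_kdiff p q :
  knorm2 K (kdiff p q) = knorm2 K p + knorm2 K q - 2 * complex.Re (kip p q).
Proof.
rewrite kdiffE knorm2_cat kip_oppr raddfN /=.
by rewrite /knorm2 !kformE kip_oppl kip_oppr opprK; ring.
Qed.

Lemma knorm2_kdiffC p q : knorm2 K (kdiff p q) = knorm2 K (kdiff q p).
Proof. by rewrite !knorm2_kdiff (kip_conj p q) ReJ; ring. Qed.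

Lemma knorm2_scale (t : R) p : knorm2 K (kscale t%:C p) = t ^+ 2 * knorm2 K p.
Proof.
have t_real : t%:C \is Num.real by apply/complex_realP; exists t.
rewrite /knorm2 kformE kip_scalel kip_scaler conj_Creal //.
by rewrite mulrA -rmorphM Re_realM expr2.
Qed.

Definition knorm p : R := Num.sqrt (knorm2 K p).

Lemma knorm_ge0 p : 0 <= knorm p.
Proof. exact: sqrtr_ge0. Qed.

Lemma sqr_knorm p : knorm p ^+ 2 = knorm2 K p.
Proof. by rewrite sqr_sqrtr // knorm2_ge0. Qed.

Lemma knorm_lt p e : 0 <= e -> (knorm p < e) = (knorm2 K p < e ^+ 2).
Proof. by move=> e_ge0; rewrite -ltr_sqr ?nnegrE ?knorm_ge0 // sqr_knorm. Qed.

Lemma Re_kip_le p q : complex.Re (kip p q) <= knorm p * knorm q.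
Proof.
apply: le_sqrtM_of_quadratic_ge0; try exact: knorm2_ge0.
move=> t; have := knorm2_ge0 (kdiff p (kscale t%:C q)).
rewrite knorm2_kdiff knorm2_scale kip_scaler Re_realM.
by congr (0 <= _); ring.
Qed.

Lemma knorm_cat p q : knorm (p ++ q) <= knorm p + knorm q.
Proof.
rewrite -ler_sqr ?nnegrE ?addr_ge0 ?knorm_ge0 // sqrrD !sqr_knorm knorm2_cat.
have := Re_kip_le p q; lra.
Qed.

Lemma knorm_le_kdiff p q : knorm p <= knorm (kdiff p q) + knorm q.
Proof.
rewrite /knorm (@eq_knorm2 p (kdiff p q ++ q)); first exact: knorm_cat.
by move=> y; rewrite kfun_cat kfun_kdiff subrK.
Qed.

Lemma Re_K_diag x : (complex.Re (K x x))%:C = K x x.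
Proof. exact/RRe_real/ger0_real/K_diag_ge0. Qed.

Lemma Re_K_diag_ge0 x : 0 <= complex.Re (K x x).
Proof. by rewrite -(lecR 0) Re_K_diag K_diag_ge0. Qed.

Lemma knorm_single x c : knorm [:: (x, c)] = cmod c * Num.sqrt (complex.Re (K x x)).
Proof.
rewrite /knorm /knorm2 kform_single sqr_cmod -Re_K_diag -rmorphM /=.
by rewrite sqrtrM ?sqr_ge0 // sqrtr_sqr ger0_norm ?cmod_ge0.
Qed.

(* The reproducing property [f(x) = <K(., x), f>] with Cauchy--Schwarz. *)
Lemma sqr_cmod_kfun_le p x :
  cmod (kfun K p x) ^+ 2 <= complex.Re (K x x) * knorm2 K p.
Proof.
set z := kfun K p x.
have cs := Re_kip_le [:: (x, z)] p.
rewrite kipE /kpair big_cons big_nil addr0 /= -/z sqr_cmod knorm_single in cs.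
have z_bound : cmod z <= Num.sqrt (complex.Re (K x x)) * knorm p.
  have [z0|z_gt0] := eqVneq (cmod z) 0; first by rewrite z0 mulr_ge0 ?sqrtr_ge0 ?knorm_ge0.
  by rewrite expr2 -mulrA ler_pM2l // lt_def z_gt0 cmod_ge0 in cs.
rewrite -sqr_knorm -[complex.Re (K x x)]sqr_sqrtr ?Re_K_diag_ge0 // -exprMn.
by rewrite ler_sqr ?nnegrE ?cmod_ge0 ?mulr_ge0 ?sqrtr_ge0 ?knorm_ge0.
Qed.

Lemma kip_eq0_of_knorm2_eq0 p q : knorm2 K p = 0 -> kip p q = 0.
Proof.
move=> p0; have Re_le0 q' : complex.Re (kip p q') <= 0.
  by have := Re_kip_le p q'; rewrite /knorm p0 sqrtr0 mul0r.
have := Re_le0 q; have := Re_le0 (kopp q).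
have := Re_le0 (kscale 'i%C q); have := Re_le0 (kscale (- 'i%C) q).
rewrite kip_oppr !kip_scaler; case: (kip p q) => a b /= *.
have -> : a = 0 by lra.
by have -> : b = 0 by lra.
Qed.

Local Notation pt xs i := (tnth (in_tuple xs) i).

Definition kcomb (xs : seq X) (c : 'cV[C]_(size xs)) : L :=
  [seq (pt xs i, c i 0) | i <- index_enum 'I_(size xs)].

Lemma kpair_kcomb xs (c : 'cV[C]_(size xs)) h :
  kpair (kcomb c) h = (adjmx c *m hcol h xs) 0 0.
Proof. by rewrite /kpair big_map mxE; apply: eq_bigr => i _; rewrite !mxE. Qed.

Lemma hcol_kcomb xs (c : 'cV[C]_(size xs)) :
  hcol (kfun K (kcomb c)) xs = Kmx K xs *m c.
Proof.
apply/colP => j; rewrite !mxE /kfun big_map.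
by apply: eq_bigr => i _; rewrite !mxE mulrC.
Qed.

Lemma kform_kcomb xs (c : 'cV[C]_(size xs)) :
  kip (kcomb c) (kcomb c) = (adjmx c *m Kmx K xs *m c) 0 0.
Proof. by rewrite kipE kpair_kcomb hcol_kcomb mulmxA. Qed.

Lemma Kmx_psd xs : psd_mx (Kmx K xs).
Proof.
split; first by apply/matrixP => i j; rewrite !mxE K_herm.
by move=> c; rewrite -kform_kcomb; apply: Kpos.
Qed.

Section Projection.
Variables (xs : seq X) (Kxs_unit : Kmx K xs \in unitmx).

Lemma invKmx_psd : psd_mx (invmx (Kmx K xs)).
Proof.
have [K_herm K_ge0] := Kmx_psd xs.
split; first by rewrite adjmx_inv -K_herm.
move=> v; have -> : adjmx v *m invmx (Kmx K xs) *m v =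
    adjmx (invmx (Kmx K xs) *m v) *m Kmx K xs *m (invmx (Kmx K xs) *m v).
  by rewrite adjmxM adjmx_inv -K_herm -!mulmxA (mulmxA (Kmx K xs)) mulmxV // mul1mx.
exact: K_ge0.
Qed.

(* P_F h for F = xs: the minimal-norm element of H_0 interpolating h on xs. *)
Definition kproj h : L := kcomb (invmx (Kmx K xs) *m hcol h xs).

Lemma hcol_kproj h : hcol (kfun K (kproj h)) xs = hcol h xs.
Proof. by rewrite hcol_kcomb mulmxA mulmxV // mul1mx. Qed.

Lemma kip_kproj h q : hcol (kfun K q) xs = hcol h xs ->
  kip (kproj h) q = kpair (kproj h) h.
Proof. by move=> qh; rewrite kipE !kpair_kcomb qh. Qed.

Lemma kpair_kproj h : kpair (kproj h) h = kip (kproj h) (kproj h).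
Proof. by rewrite (kip_kproj (hcol_kproj h)). Qed.

Lemma knorm2_kdiff_kproj h q : hcol (kfun K q) xs = hcol h xs ->
  knorm2 K (kdiff q (kproj h)) = knorm2 K q - knorm2 K (kproj h).
Proof.
move=> qh; rewrite knorm2_kdiff kip_conj kip_kproj // kpair_kproj ReJ.
by rewrite /knorm2 [kform K q]kformE [kform K (kproj h)]kformE; ring.
Qed.

Lemma Qform_kproj h : Qform K h xs = knorm2 K (kproj h).
Proof.
rewrite /Qform (l2norm2_inv_sqrt_mx _ invKmx_psd) /knorm2 kformE -kpair_kproj.
rewrite kpair_kcomb adjmxM.
by have [<- _] := invKmx_psd.
Qed.

End Projection.

Lemma eq_hcol xs (f g : X -> C) : {in xs, f =1 g} -> hcol f xs = hcol g xs.
Proof. by move=> fg; apply/colP => i; rewrite !mxE fg ?mem_tnth. Qed.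

Lemma hcol_eq_in xs (f g : X -> C) : hcol f xs = hcol g xs -> {in xs, f =1 g}.
Proof. by move=> /colP fg _ /(tnthP (in_tuple xs)) [j ->]; have := fg j; rewrite !mxE. Qed.

Lemma eq_kpair p (f g : X -> C) : {in [seq a.1 | a <- p], f =1 g} -> kpair p f = kpair p g.
Proof. by move=> fg; apply: eq_big_seq => a ap; rewrite fg // map_f. Qed.

Lemma delta_diag (x : X) : delta x x = 1 :> C.
Proof. by rewrite /delta; case: pselect. Qed.

Lemma delta_neq (x y : X) : y <> x -> delta x y = 0 :> C.
Proof. by rewrite /delta; case: pselect. Qed.

Definition kfun_cvg u h := forall x e, 0 < e ->
  exists N, forall n, (N <= n)%N -> `|kfun K (u n) x - h x| < e%:C.

Lemma near_kfun_cvg_seq u h xs e : kfun_cvg u h -> 0 < e ->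
  \forall n \near \oo, forall x, x \in xs -> cmod (kfun K (u n) x - h x) < e.
Proof.
move=> u_cvg e_gt0; elim: xs => [|x xs IH]; first exact: nearW.
have /eventuallyP u_x : exists N, forall n, (N <= n)%N -> cmod (kfun K (u n) x - h x) < e.
  by have [N u_N] := u_cvg x e e_gt0; exists N => n /u_N; rewrite ltc_cmod.
move: u_x IH; apply: filterS2 => n u_xn u_xsn y.
by rewrite in_cons => /predU1P [-> //|]; apply: u_xsn.
Qed.

Lemma near_kip_kpair u h p e : kfun_cvg u h -> 0 < e ->
  \forall n \near \oo, cmod (kip p (u n) - kpair p h) < e.
Proof.
move=> u_cvg e_gt0; set B := \sum_(a <- p) cmod a.2.
have B1_gt0 : 0 < B + 1 by rewrite ltr_wpDl ?ltr01 // sumr_ge0 // => a _; apply: cmod_ge0.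
set d := e / (B + 1).
have d_gt0 : 0 < d by rewrite divr_gt0.
move: (near_kfun_cvg_seq [seq a.1 | a <- p] u_cvg d_gt0); apply: filterS => n u_n.
rewrite kipE /kpair -sumrB; apply: le_lt_trans; first exact: cmod_sum.
apply: (@le_lt_trans _ _ (B * d)).
  rewrite /B mulr_suml !big_seq; apply: ler_sum => a ap.
  rewrite -mulrBr cmodM cmodJ ler_wpM2l ?cmod_ge0 //; exact/ltW/u_n/map_f.
by rewrite /d mulrA ltr_pdivrMr // mulrDr mulr1 [B * e]mulrC ltrDl.
Qed.

Hypothesis delta_in : forall x, inH K (delta x).

(* If [K_F c = 0] then [sum_x c_x K(., x)] has norm 0, yet its pairing with approximants
   of [delta_x] tends to [c_x^*]; hence [c = 0]. *)
Lemma Kmx_unit xs : uniq xs -> Kmx K xs \in unitmx.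
Proof.
move=> xs_uniq; have pt_inj : injective (tnth (in_tuple xs)) by apply/tuple_uniqP.
rewrite -unitmx_tr -row_free_unit -kermx_eq0; apply/rowV0P => v /sub_kermxP vK.
apply: trmx_inj; rewrite trmx0; set c := v^T.
have c_null : knorm2 K (kcomb c) = 0.
  have Kc : Kmx K xs *m c = 0 by rewrite -[Kmx K xs]trmxK -trmx_mul vK trmx0.
  by rewrite knorm2_kip kform_kcomb -mulmxA Kc mulmx0 mxE.
apply/colP => k; rewrite [RHS]mxE; apply: cmod_eq0.
have [w [_ w_cvg]] := delta_in (pt xs k).
have <- : cmod (kpair (kcomb c) (delta (pt xs k))) = cmod (c k 0).
  rewrite kpair_kcomb mxE (bigD1 k) //= big1 => [|i ik]; rewrite !mxE.
    by rewrite delta_diag mulr1 addr0 cmodJ.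
  by rewrite delta_neq ?mulr0 // => /pt_inj ik_eq; rewrite ik_eq eqxx in ik.
apply/eqP; rewrite eq_le cmod_ge0 andbT; apply/ler_addgt0Pr => e e_gt0.
have [n w_n] := filter_ex (near_kip_kpair (kcomb c) w_cvg e_gt0).
by rewrite kip_eq0_of_knorm2_eq0 // sub0r cmodN in w_n; rewrite add0r ltW.
Qed.

Lemma kproj_interp xs h : uniq xs -> {in xs, kfun K (kproj xs h) =1 h}.
Proof. by move=> xs_uniq; apply/hcol_eq_in/hcol_kproj/Kmx_unit. Qed.

Lemma knorm2_kproj_subset xs ys h : uniq xs -> uniq ys -> {subset xs <= ys} ->
  knorm2 K (kdiff (kproj ys h) (kproj xs h)) =
  knorm2 K (kproj ys h) - knorm2 K (kproj xs h).
Proof.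
move=> xs_uniq ys_uniq xs_ys; apply/knorm2_kdiff_kproj/eq_hcol; first exact: Kmx_unit.
by move=> x /xs_ys; apply: kproj_interp.
Qed.

Lemma knorm2_kproj_mono xs ys h : uniq xs -> uniq ys -> {subset xs <= ys} ->
  knorm2 K (kproj xs h) <= knorm2 K (kproj ys h).
Proof.
move=> xs_uniq ys_uniq xs_ys; rewrite -subr_ge0 -knorm2_kproj_subset //.
exact: knorm2_ge0.
Qed.

Lemma sqr_cmod_kproj_sub_le xs ys h x : uniq xs -> uniq ys -> {subset xs <= ys} ->
  x \in ys -> cmod (kfun K (kproj xs h) x - h x) ^+ 2 <=
  complex.Re (K x x) * (knorm2 K (kproj ys h) - knorm2 K (kproj xs h)).
Proof.
move=> xs_uniq ys_uniq xs_ys x_ys; rewrite -knorm2_kproj_subset // -cmodN.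
by rewrite opprB -(kproj_interp h ys_uniq x_ys) -kfun_kdiff sqr_cmod_kfun_le.
Qed.

Lemma near_knorm2_gt_kproj u h xs e : kfun_cvg u h -> uniq xs -> 0 < e ->
  \forall n \near \oo, knorm2 K (kproj xs h) - e < knorm2 K (u n).
Proof.
move=> u_cvg xs_uniq e_gt0; have e2_gt0 : 0 < e / 2 by rewrite divr_gt0.
move: (near_kip_kpair (kproj xs h) u_cvg e2_gt0); apply: filterS => n.
rewrite kpair_kproj ?Kmx_unit // => close.
have := knorm2_ge0 (kdiff (u n) (kproj xs h)); rewrite knorm2_kdiff kip_conj ReJ.
have := ReB_le_cmod (kip (kproj xs h) (kproj xs h)) (kip (kproj xs h) (u n)).
rewrite -cmodN opprB -knorm2_kip; lra.
Qed.

Lemma approximates_kproj_bounded u h : approximates K h u ->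
  exists M, forall xs, uniq xs -> knorm2 K (kproj xs h) <= M.
Proof.
case=> u_cauchy u_cvg; have [N u_N] := u_cauchy 1 ltr01.
exists ((knorm (u N) + 1) ^+ 2 + 1) => xs xs_uniq.
have [n [Nn lower]] :
    exists n, (N <= n)%N /\ knorm2 K (kproj xs h) - 1 < knorm2 K (u n).
  apply: (@filter_ex _ \oo _); near=> n; split; near: n.
    by apply/eventuallyP; exists N.
  exact: near_knorm2_gt_kproj.
have near_N : knorm (kdiff (u n) (u N)) < 1 by rewrite knorm_lt ?ler01 // expr1n u_N.
have : knorm (u n) ^+ 2 <= (knorm (u N) + 1) ^+ 2.
  rewrite ler_sqr ?nnegrE ?addr_ge0 ?knorm_ge0 //.
  by have := knorm_le_kdiff (u n) (u N); lra.
by rewrite sqr_knorm; lra.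
Unshelve. all: by end_near.
Qed.

Lemma near_knorm_le u h S d : approximates K h u ->
  (forall xs, uniq xs -> knorm2 K (kproj xs h) <= S) -> 0 < d ->
  \forall m \near \oo, knorm (u m) <= Num.sqrt S + d.
Proof.
case=> u_cauchy u_cvg S_ub d_gt0.
have [N u_N] := u_cauchy (d ^+ 2) (exprn_gt0 2 d_gt0).
apply/eventuallyP; exists N => m Nm.
set ys := undup [seq a.1 | a <- u m].
have ys_uniq : uniq ys := undup_uniq _.
set P := kproj ys h.
have pair_P : kpair (u m) h = kip (u m) P.
  by rewrite kipE; apply: eq_kpair => x x_supp; rewrite kproj_interp // mem_undup.
have S_ge0 : 0 <= S := le_trans (knorm2_ge0 _) (S_ub [::] isT).
have P_le : knorm P <= Num.sqrt S by rewrite /knorm ler_sqrt // S_ub.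
have um_ge0 := knorm_ge0 (u m).
have um_sqr_le : knorm (u m) ^+ 2 <= knorm (u m) * (Num.sqrt S + d).
  apply/ler_addgt0Pr => eta eta_gt0.
  have [n [Nn close]] :
      exists n, (N <= n)%N /\ cmod (kip (u m) (u n) - kpair (u m) h) < eta.
    apply: (@filter_ex _ \oo _); near=> n; split; near: n.
      by apply/eventuallyP; exists N.
    exact: near_kip_kpair.
  rewrite pair_P in close.
  have near_mn : knorm (kdiff (u m) (u n)) < d by rewrite knorm_lt ?ltW // u_N.
  have := ReB_le_cmod (kip (u m) (u n)) (kip (u m) P).
  have := ler_wpM2l um_ge0 P_le; have := ler_wpM2l um_ge0 (ltW near_mn).
  have := Re_kip_le (u m) P; have := Re_kip_le (u m) (kdiff (u m) (u n)).
  rewrite [kip _ (kdiff _ _)]kip_catr kip_oppr raddfD raddfN /= sqr_knorm knorm2_kip.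
  lra.
have [um0|um_neq0] := eqVneq (knorm (u m)) 0.
  by rewrite um0 addr_ge0 ?sqrtr_ge0 ?ltW.
by rewrite expr2 ler_pM2l ?lt_def ?um_neq0 in um_sqr_le.
Unshelve. all: by end_near.
Qed.

Lemma knorm2_cvg_sup u h S : approximates K h u ->
  (forall xs, uniq xs -> knorm2 K (kproj xs h) <= S) ->
  (forall e, 0 < e -> exists2 xs, uniq xs & S - e < knorm2 K (kproj xs h)) ->
  forall e, 0 < e -> exists N, forall n, (N <= n)%N -> `|knorm2 K (u n) - S| < e.
Proof.
move=> u_approx S_ub S_adh e e_gt0.
have S_ge0 : 0 <= S := le_trans (knorm2_ge0 _) (S_ub [::] isT).
have e2_gt0 : 0 < e / 2 by rewrite divr_gt0.
have [xs xs_uniq S_xs] := S_adh _ e2_gt0.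
set s := Num.sqrt S; have s_ge0 : 0 <= s := sqrtr_ge0 S.
set D := 2 * s + e + 1; have D_gt0 : 0 < D by rewrite /D; lra.
set d := e / D.
have d_gt0 : 0 < d by rewrite divr_gt0.
have dD : d * D = e by rewrite divfK ?gt_eqF.
have d_lt1 : d < 1 by rewrite ltr_pdivrMr // mul1r /D; lra.
have d_small : d * (2 * s + d) < e by rewrite -dD ltr_pM2l // /D; lra.
apply/eventuallyP; near=> n.
have lower : knorm2 K (kproj xs h) - e / 2 < knorm2 K (u n).
  by near: n; exact: near_knorm2_gt_kproj u_approx.2 xs_uniq e2_gt0.
have upper : knorm2 K (u n) <= (s + d) ^+ 2.
  have : knorm (u n) <= s + d by near: n; exact: near_knorm_le u_approx S_ub d_gt0.
  by rewrite -sqr_knorm ler_sqr ?nnegrE ?knorm_ge0 //; lra.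
rewrite sqrrD sqr_sqrtr // in upper.
rewrite ltr_norml; apply/andP; split; lra.
Unshelve. all: by end_near.
Qed.

Section KprojChain.
Variables (h : X -> C) (F : nat -> seq X).
Hypothesis F_uniq : forall k, uniq (F k).
Hypothesis F_mono : forall k l, (k <= l)%N -> {subset F k <= F l}.
Hypothesis F_gap : forall N n ys, (N <= n)%N -> uniq ys -> {subset F n <= ys} ->
  knorm2 K (kproj ys h) - knorm2 K (kproj (F n) h) < N.+1%:R^-1.

Lemma kproj_chain_cauchy e : 0 < e -> exists N, forall m n, (N <= m)%N -> (N <= n)%N ->
  knorm2 K (kdiff (kproj (F m) h) (kproj (F n) h)) < e.
Proof.
move=> e_gt0; have [N] := ltr_add_invr e_gt0; rewrite add0r => N_e.
exists N => m n Nm Nn.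
wlog nm : m n Nm Nn / (n <= m)%N => [wlog_nm|].
  by case: (leqP n m) => [|/ltnW] mn; [|rewrite knorm2_kdiffC]; apply: wlog_nm.
rewrite knorm2_kproj_subset //; last exact: F_mono.
exact: lt_trans (F_gap Nn (F_uniq m) (F_mono nm)) N_e.
Qed.

Lemma kproj_chain_cvg : kfun_cvg (fun n => kproj (F n) h) h.
Proof.
move=> x e e_gt0; set a := complex.Re (K x x).
have a_ge0 : 0 <= a := Re_K_diag_ge0 x.
have [N N_e] : exists N, a * N.+1%:R^-1 < e ^+ 2.
  have [N] : exists N, 0 + N.+1%:R^-1 < e ^+ 2 / (a + 1).
    by apply: ltr_add_invr; rewrite divr_gt0 ?exprn_gt0 //; lra.
  rewrite add0r ltr_pdivlMr; last lra.
  move=> N_lt; exists N; apply: le_lt_trans N_lt.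
  by rewrite mulrC ler_pM2l ?invr_gt0 ?ltr0Sn // lerDl ler01.
exists N => n Nn; rewrite ltc_cmod -ltr_sqr ?nnegrE ?cmod_ge0 ?ltW //.
set G := undup (x :: F n).
have F_G : {subset F n <= G} by move=> y y_Fn; rewrite mem_undup in_cons y_Fn orbT.
have x_G : x \in G by rewrite mem_undup mem_head.
have G_uniq : uniq G := undup_uniq _.
apply: le_lt_trans N_e.
apply: le_trans (sqr_cmod_kproj_sub_le h (F_uniq n) G_uniq F_G x_G) _.
by have := ler_wpM2l a_ge0 (ltW (F_gap Nn G_uniq F_G)).
Qed.

End KprojChain.

Lemma inH_of_kproj_bounded h S :
  (forall xs, uniq xs -> knorm2 K (kproj xs h) <= S) ->
  (forall e, 0 < e -> exists2 xs, uniq xs & S - e < knorm2 K (kproj xs h)) ->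
  inH K h.
Proof.
move=> S_ub S_adh.
have adh_k k : exists xs, uniq xs /\ S - k.+1%:R^-1 < knorm2 K (kproj xs h).
  have k_gt0 : 0 < k.+1%:R^-1 :> R by rewrite invr_gt0 ltr0Sn.
  by have [xs ? ?] := S_adh _ k_gt0; exists xs.
have [f f_adh] := choice adh_k.
pose F k := undup (cumul f k).
have F_uniq k : uniq (F k) := undup_uniq _.
have F_mono k l : (k <= l)%N -> {subset F k <= F l}.
  by move=> kl x; rewrite !mem_undup; apply: cumul_subset.
have F_gap N n ys : (N <= n)%N -> uniq ys -> {subset F n <= ys} ->
    knorm2 K (kproj ys h) - knorm2 K (kproj (F n) h) < N.+1%:R^-1.
  move=> Nn ys_uniq _; have [fN_uniq fN_gt] := f_adh N.
  have := knorm2_kproj_mono h (F_uniq N) (F_uniq n) (F_mono N n Nn).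
  have : {subset f N <= F N} by move=> x; rewrite mem_undup; apply: mem_cumul.
  move/(knorm2_kproj_mono h fN_uniq (F_uniq N)); have := S_ub _ ys_uniq.
  (* Generalizing [N.+1%:R^-1] lets lra treat it as an atom. *)
  by move: (N.+1%:R^-1) fN_gt => t; lra.
exists (fun n => kproj (F n) h).
by split; [apply: kproj_chain_cauchy | apply: kproj_chain_cvg].
Qed.

Lemma rkhs_kproj_sup h :
  (inH K h <-> exists M, forall xs, uniq xs -> Qform K h xs <= M) /\
  (inH K h -> rkhs_norm2 K h (sup [set Qform K h xs | xs in [set xs | uniq xs]])).
Proof.
have Qform_kproj_uniq xs : uniq xs -> Qform K h xs = knorm2 K (kproj xs h).
  by move=> xs_uniq; apply/Qform_kproj/Kmx_unit.
set E := [set _ | _ in _].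
have sup_E M : (forall xs, uniq xs -> knorm2 K (kproj xs h) <= M) ->
    (forall xs, uniq xs -> knorm2 K (kproj xs h) <= sup E) /\
    (forall e, 0 < e -> exists2 xs, uniq xs & sup E - e < knorm2 K (kproj xs h)).
  move=> M_ub; have E_sup : has_sup E.
    split; first by exists (Qform K h [::]), [::].
    by exists M => _ [xs xs_uniq <-]; rewrite Qform_kproj_uniq // M_ub.
  split=> [xs xs_uniq|e e_gt0].
    by rewrite -Qform_kproj_uniq //; apply: sup_upper_bound => //; exists xs.
  have [_ [xs xs_uniq <-] E_xs] := sup_adherent e_gt0 E_sup.
  by exists xs; rewrite -?Qform_kproj_uniq.
split; first split.
- case=> u /approximates_kproj_bounded [M M_ub].
  by exists M => xs xs_uniq; rewrite Qform_kproj_uniq // M_ub.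
- case=> M M_ub; have [] := sup_E M.
    by move=> xs xs_uniq; rewrite -Qform_kproj_uniq ?M_ub.
  exact: inH_of_kproj_bounded.
- move=> _ u u_approx; have [M /sup_E [S_ub S_adh]] := approximates_kproj_bounded u_approx.
  exact: knorm2_cvg_sup u_approx S_ub S_adh.
Qed.

End RKHS.

Lemma In_mem (T : eqType) (s : seq T) x : List.In x s <-> x \in s.
Proof.
elim: s => [|y s IH] //=; rewrite in_cons.
by split=> [[->|/IH ->]|/predU1P [->|/IH]]; rewrite ?eqxx ?orbT //; [left|right].
Qed.

Lemma NoDup_uniq (T : eqType) (s : seq T) : List.NoDup s <-> uniq s.
Proof.
elim: s => [|x s IH] /=; first by split=> // _; apply: List.NoDup_nil.
rewrite List.NoDup_cons_iff IH; split=> [[x_s ->]|/andP [/negP x_s ->]].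
  by rewrite andbT; apply/negP => /In_mem.
by split=> // /In_mem.
Qed.

Theorem corollary8p5 (R : realType) (X : Type) (K : X -> X -> R[i]) :
  pos_def K ->
  (forall x : X, inH K (delta x)) ->
  forall h : X -> R[i],
    (inH K h <-> exists M : R, forall xs : seq X, List.NoDup xs -> Qform K h xs <= M)
    /\
    (inH K h -> rkhs_norm2 K h (sup [set Qform K h xs | xs in [set xs | List.NoDup xs]])).
Proof.
move=> Kpos delta_in h.
have NoDup_set : [set xs : seq X | List.NoDup xs] = [set xs : seq {classic X} | uniq xs].
  by apply/seteqP; split=> xs /(NoDup_uniq (T := {classic X})).
have [bounded_iff norm_sup] := rkhs_kproj_sup (X := {classic X}) Kpos delta_in h.
split; last by rewrite NoDup_set.
rewrite bounded_iff; split=> -[M M_ub]; exists M => xs /(NoDup_uniq (T := {classic X})).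
all: exact: M_ub.
Qed.
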